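(* Let $n_0,n_1$ be positive integers and let $(\eta,\omega)=((\eta_\ell)_{\ell\ge1},(\omega_\ell)_{\ell\ge1})$ be a pair of nonnegative integer sequences with finite support. The pair of conditions [(a) $\mathsf{K}^+=0$, and (b) $\mathsf{K}^+_\ell\ge|\mathsf{K}^-_\ell|$ for every $\ell\ge1$] is equivalent to the following conditions: (i) $\sum_{\ell\ge1}\frac{\eta_\ell+\omega_\ell}{(n_0+n_1)^\ell}=1$; (ii) $\sum_{\ell\ge1}\frac{\eta_\ell-\omega_\ell}{(n_0-n_1)^\ell}=1$ whenever $n_0\ne n_1$; (iii) for every $\ell\ge1$, $\sum_{i\ge1}\frac{\eta_{\ell+i}+\omega_{\ell+i}}{(n_0+n_1)^i}\ge|\eta_\ell-\omega_\ell|$ if $n_0=n_1$, and $\sum_{i\ge1}\frac{\eta_{\ell+i}+\omega_{\ell+i}}{(n_0+n_1)^i}\ge\Bigl|\sum_{i\ge1}\frac{\eta_{\ell+i}-\omega_{\ell+i}}{(n_0-n_1)^i}\Bigr|$ if $n_0\ne n_1$.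
   Context: For integers $n,\ell>0$ and a finite-support integer sequence $\mu=(\mu_i)_{i\ge1}$, $\mathsf{K}_\ell(\mu,n)=n^\ell-\sum_{i=1}^{\ell}\mu_i n^{\ell-i}$ (with $0^0=1$). Define $\mathsf{K}^+_\ell=\mathsf{K}_\ell(\eta+\omega,n_0+n_1)$, $\mathsf{K}^-_\ell=\mathsf{K}_\ell(\eta-\omega,n_0-n_1)$, let $\mathsf{r}$ be the largest index in the union of the supports of $\eta$ and $\omega$, and $\mathsf{K}^\pm=\mathsf{K}^\pm_{\mathsf{r}}$. *)

From mathcomp Require Import all_boot all_order all_algebra.
Set Implicit Arguments. Unset Strict Implicit. Unset Printing Implicit Defensive.
Import Order.TTheory GRing.Theory Num.Theory.
Local Open Scope ring_scope.

(* Sequences (mu_i)_{i>=1} are functions nat -> _ ; the value at index 0 is never used. *)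

(* K_l(mu, n) = n^l - sum_{i=1}^l mu_i n^(l-i)   (with 0^0 = 1, as n ^+ 0 = 1) *)
Definition K (mu : nat -> int) (n : int) (l : nat) : int :=
  n ^+ l - \sum_(1 <= i < l.+1) mu i * n ^+ (l - i).

Definition Kplus (eta omega : nat -> nat) (n0 n1 : nat) (l : nat) : int :=
  K (fun i => (eta i + omega i)%:Z) (n0%:Z + n1%:Z) l.

Definition Kminus (eta omega : nat -> nat) (n0 n1 : nat) (l : nat) : int :=
  K (fun i => (eta i)%:Z - (omega i)%:Z) (n0%:Z - n1%:Z) l.

(* r = largest index l >= 1 in supp(eta) U supp(omega), computed using a bound N
   beyond which eta and omega vanish (0 if both sequences are identically zero). *)
Definition last_supp (eta omega : nat -> nat) (N : nat) : nat :=
  (\max_(1 <= l < N.+1 | eta l + omega l != 0) l)%N.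

Definition sum_plus (eta omega : nat -> nat) (n0 n1 N : nat) : rat :=
  \sum_(1 <= l < N.+1) (eta l + omega l)%:R / (n0 + n1)%:R ^+ l.

Definition sum_minus (eta omega : nat -> nat) (n0 n1 N : nat) : rat :=
  \sum_(1 <= l < N.+1) ((eta l)%:R - (omega l)%:R) / (n0%:R - n1%:R) ^+ l.

Definition tail_plus (eta omega : nat -> nat) (n0 n1 N l : nat) : rat :=
  \sum_(1 <= i < N.+1) (eta (l + i) + omega (l + i))%:R / (n0 + n1)%:R ^+ i.

Definition tail_minus (eta omega : nat -> nat) (n0 n1 N l : nat) : rat :=
  \sum_(1 <= i < N.+1) ((eta (l + i))%:R - (omega (l + i))%:R) / (n0%:R - n1%:R) ^+ i.

(* For [n != 0] and [mu] vanishing beyond [N], the recursion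
   [K_(l+1) = n K_l - mu_(l+1)] yields the exact expansion
     [K_l(mu, n) = n^l (1 - sum_i mu_i / n^i) + sum_(i>=1) mu_(l+i) / n^i].
   The tail vanishes at [l = r], so (a) says that the series for [K^+] sums to 1, and then
   [K^+_l] is its tail.  If [n0 = n1] the recursion gives [K^-_l = omega_l - eta_l] directly;
   otherwise (b) at [l = N + 1], where both tails vanish, forces the series for [K^-] to
   sum to 1, after which [K^-_l] is its tail as well. *)
From mathcomp Require Import all_boot all_order all_algebra.
From mathcomp Require Import ring.
Set Implicit Arguments. Unset Strict Implicit. Unset Printing Implicit Defensive.
Import Order.TTheory GRing.Theory Num.Theory.
Local Open Scope ring_scope.

Lemma K0 (mu : nat -> int) (n : int) : K mu n 0 = 1.
Proof. by rewrite /K big_geq // subr0. Qed.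

Lemma KS (mu : nat -> int) (n : int) l : K mu n l.+1 = n * K mu n l - mu l.+1.
Proof.
rewrite /K big_nat_recr //= subnn expr0 mulr1 mulrBr -exprS opprD addrA.
congr (_ - _ - _); rewrite mulr_sumr; apply: eq_big_nat => i /andP[_ le_il].
by rewrite subSn // exprS mulrCA.
Qed.

Section SeriesExpansion.

Variables (R : fieldType) (mu : nat -> R) (n : R) (N : nat).
Hypothesis n_neq0 : n != 0.
Hypothesis mu_supp : forall i, (N < i)%N -> mu i = 0.

Definition series_sum := \sum_(1 <= i < N.+1) mu i / n ^+ i.
Definition series_tail l := \sum_(1 <= i < N.+1) mu (l + i) / n ^+ i.

Lemma series_tail0 : series_tail 0 = series_sum.
Proof. by apply: eq_bigr => i _; rewrite add0n. Qed.

Lemma series_tailS l : series_tail l.+1 = n * series_tail l - mu l.+1.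
Proof.
have shift : n * series_tail l = \sum_(0 <= i < N.+1) mu (l.+1 + i) / n ^+ i.
  rewrite big_nat_recr //= addSnnS mu_supp ?mul0r ?addr0 ?ltnS ?leq_addl //.
  rewrite /series_tail big_add1 /= mulr_sumr; apply: eq_bigr => i _.
  by rewrite addSnnS exprS; field; rewrite expf_neq0.
by rewrite shift big_nat_recl // addn0 expr0 divr1 addrC addKr /series_tail big_add1.
Qed.

Lemma series_expansion (k : nat -> R) :
  k 0 = 1 -> (forall l, k l.+1 = n * k l - mu l.+1) ->
  forall l, k l = n ^+ l * (1 - series_sum) + series_tail l.
Proof.
move=> k0 kS; elim=> [|l IHl]; first by rewrite k0 series_tail0 expr0 mul1r subrK.
by rewrite kS IHl series_tailS exprS; ring.
Qed.

Lemma series_tail_eq0 l : (forall i, (l < i)%N -> mu i = 0) -> series_tail l = 0.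
Proof.
move=> mu_supp_l; rewrite /series_tail big_nat big1 // => i /andP[i_gt0 _].
by rewrite mu_supp_l ?mul0r // -addn1 leq_add2l.
Qed.

End SeriesExpansion.

Section SignatureSums.

Variables (eta omega : nat -> nat) (n0 n1 N : nat).
Hypothesis n0_gt0 : (0 < n0)%N.
Hypothesis supp_N : forall l, (N < l)%N -> eta l = 0%N /\ omega l = 0%N.

Lemma Kplus_expansion l :
  (Kplus eta omega n0 n1 l)%:~R = (n0 + n1)%:R ^+ l * (1 - sum_plus eta omega n0 n1 N)
                                  + tail_plus eta omega n0 n1 N l :> rat.
Proof.
move: l; apply: series_expansion => [|i /supp_N[-> ->] //||k].
- by rewrite pnatr_eq0 addn_eq0 negb_and -lt0n n0_gt0.
- by rewrite /Kplus K0.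
- by rewrite /Kplus KS rmorphB rmorphM /= !rmorphD /= -!pmulrn.
Qed.

Lemma Kminus_expansion l : n0 != n1 ->
  (Kminus eta omega n0 n1 l)%:~R = (n0%:R - n1%:R) ^+ l * (1 - sum_minus eta omega n0 n1 N)
                                   + tail_minus eta omega n0 n1 N l :> rat.
Proof.
move=> n0_neq_n1.
move: l; apply: series_expansion => [|i /supp_N[-> ->]||k].
- by rewrite subr_eq0 eqr_nat.
- by rewrite subrr.
- by rewrite /Kminus K0.
- by rewrite /Kminus KS rmorphB rmorphM /= !rmorphB /= -!pmulrn.
Qed.

Lemma tail_plus_eq0 l : (forall i, (l < i)%N -> eta i = 0%N /\ omega i = 0%N) ->
  tail_plus eta omega n0 n1 N l = 0.
Proof.
move=> supp_l; apply: (series_tail_eq0 (mu := fun i => (eta i + omega i)%:R)).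
by move=> i /supp_l[-> ->].
Qed.

Lemma tail_minus_eq0 l : (forall i, (l < i)%N -> eta i = 0%N /\ omega i = 0%N) ->
  tail_minus eta omega n0 n1 N l = 0.
Proof.
move=> supp_l; apply: (series_tail_eq0 (mu := fun i => (eta i)%:R - (omega i)%:R)).
by move=> i /supp_l[-> ->]; rewrite subrr.
Qed.

Lemma Kplus_tail l : sum_plus eta omega n0 n1 N = 1 ->
  (Kplus eta omega n0 n1 l)%:~R = tail_plus eta omega n0 n1 N l :> rat.
Proof. by move=> Sp1; rewrite Kplus_expansion Sp1 subrr mulr0 add0r. Qed.

Lemma Kminus_tail l : n0 != n1 -> sum_minus eta omega n0 n1 N = 1 ->
  (Kminus eta omega n0 n1 l)%:~R = tail_minus eta omega n0 n1 N l :> rat.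
Proof. by move=> n0_neq_n1 Sm1; rewrite Kminus_expansion // Sm1 subrr mulr0 add0r. Qed.

Lemma after_last_supp l : (last_supp eta omega N < l)%N -> eta l = 0%N /\ omega l = 0%N.
Proof.
move=> lt_last_l; have [/supp_N //|le_lN] := ltnP N l.
have l_gt0 : (0 < l)%N := leq_ltn_trans (leq0n _) lt_last_l.
suff : (eta l + omega l == 0)%N by rewrite addn_eq0 => /andP[/eqP-> /eqP->].
apply: contraLR lt_last_l; rewrite -leqNgt => nz_l.
by apply: (@leq_bigmax_seq _ _ _ id); rewrite // mem_index_iota ltnS l_gt0 le_lN.
Qed.

Lemma Kplus_last_supp_eq0 :
  Kplus eta omega n0 n1 (last_supp eta omega N) = 0 <-> sum_plus eta omega n0 n1 N = 1.
Proof.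
have tail0 := tail_plus_eq0 after_last_supp.
have P_neq0 : (n0 + n1)%:R ^+ last_supp eta omega N != 0 :> rat.
  by rewrite expf_neq0 // pnatr_eq0 addn_eq0 negb_and -lt0n n0_gt0.
have := Kplus_expansion (last_supp eta omega N); rewrite tail0 addr0 => KrE.
split=> [Kr0|Sp1]; last by apply/eqP; rewrite -(intr_eq0 rat) KrE Sp1 subrr mulr0.
by move/esym/eqP: KrE; rewrite Kr0 mulr0z mulf_eq0 (negPf P_neq0) subr_eq0 => /eqP <-.
Qed.

Lemma Kminus_diag l : Kminus eta omega n0 n0 l.+1 = (omega l.+1)%:Z - (eta l.+1)%:Z.
Proof. by rewrite /Kminus subrr KS mul0r sub0r opprB. Qed.

Lemma Kminus_diag_le l : n0 = n1 -> sum_plus eta omega n0 n1 N = 1 ->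
  (`|Kminus eta omega n0 n1 l.+1| <= Kplus eta omega n0 n1 l.+1)
  = (`|(eta l.+1)%:R - (omega l.+1)%:R : rat| <= tail_plus eta omega n0 n1 N l.+1).
Proof.
move=> n0_eq_n1 Sp1; rewrite -(ler_int rat) intr_norm Kplus_tail // -n0_eq_n1.
by rewrite Kminus_diag rmorphB /= -!pmulrn distrC.
Qed.

Lemma sum_minus_eq1 : n0 != n1 -> sum_plus eta omega n0 n1 N = 1 ->
  `|Kminus eta omega n0 n1 N.+1| <= Kplus eta omega n0 n1 N.+1 ->
  sum_minus eta omega n0 n1 N = 1.
Proof.
move=> n0_neq_n1 Sp1.
have supp_SN i : (N.+1 < i)%N -> eta i = 0%N /\ omega i = 0%N by move/ltnW/supp_N.
have tailp0 := tail_plus_eq0 supp_SN; have tailm0 := tail_minus_eq0 supp_SN.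
rewrite -(ler_int rat) intr_norm Kplus_tail // tailp0 normr_le0 Kminus_expansion //.
rewrite tailm0 addr0 mulf_eq0 expf_eq0 subr_eq0 eqr_nat (negPf n0_neq_n1) andbF /=.
by rewrite subr_eq0 => /eqP <-.
Qed.

Lemma Kminus_offdiag_le l : n0 != n1 ->
  sum_plus eta omega n0 n1 N = 1 -> sum_minus eta omega n0 n1 N = 1 ->
  (`|Kminus eta omega n0 n1 l| <= Kplus eta omega n0 n1 l)
  = (`|tail_minus eta omega n0 n1 N l| <= tail_plus eta omega n0 n1 N l).
Proof.
by move=> n0_neq_n1 Sp1 Sm1; rewrite -(ler_int rat) intr_norm Kplus_tail // Kminus_tail.
Qed.

End SignatureSums.

Theorem lemma1 (n0 n1 : nat) (eta omega : nat -> nat) (N : nat) :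
  (0 < n0)%N -> (0 < n1)%N ->
  (forall l, (N < l)%N -> eta l = 0%N /\ omega l = 0%N) ->
  (Kplus eta omega n0 n1 (last_supp eta omega N) = 0 /\
   (forall l, (1 <= l)%N ->
      `|Kminus eta omega n0 n1 l| <= Kplus eta omega n0 n1 l))
  <->
  (sum_plus eta omega n0 n1 N = 1 /\
   (n0 != n1 -> sum_minus eta omega n0 n1 N = 1) /\
   (forall l, (1 <= l)%N ->
      if n0 == n1 then
        `|(eta l)%:R - (omega l)%:R : rat| <= tail_plus eta omega n0 n1 N l
      else
        `|tail_minus eta omega n0 n1 N l| <= tail_plus eta omega n0 n1 N l)).
Proof.
move=> n0_gt0 _ supp_N; rewrite Kplus_last_supp_eq0 //.
have [n0_eq_n1|n0_neq_n1] := eqVneq n0 n1.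
  split=> [[Sp1 le_K]|[Sp1 [_ le_tail]]]; split=> //.
    split=> // -[|l] l_gt0 //.
    by rewrite -(Kminus_diag_le n0_gt0 supp_N) // le_K.
  by move=> [|l] l_gt0 //; rewrite (Kminus_diag_le n0_gt0 supp_N) // le_tail.
split=> [[Sp1 le_K]|[Sp1 [Sm1 le_tail]]]; split=> //.
  have Sm1 := sum_minus_eq1 n0_gt0 supp_N n0_neq_n1 Sp1 (le_K N.+1 isT).
  by split=> // l l_gt0; rewrite -(Kminus_offdiag_le n0_gt0 supp_N) // le_K.
by move=> l l_gt0; rewrite (Kminus_offdiag_le n0_gt0 supp_N) ?Sm1 // le_tail.
Qed.
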